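(* Let $X$ be a compact metric space and $f\colon X\to X$ a homeomorphism with the pseudo-orbit tracing property. If $f$ has a positively expansive measure, then $f$ has positive topological entropy.
   Context: Given $\delta\ge 0$, a bi-infinite sequence $(x_i)_{i\in\mathbb{Z}}$ in $X$ is a $\delta$-pseudo-orbit of $f$ if $d(f(x_i),x_{i+1})\le\delta$ for all $i\in\mathbb{Z}$; it is $\epsilon$-shadowed if there is $x\in X$ with $d(f^i(x),x_i)\le\epsilon$ for all $i\in\mathbb{Z}$. $f$ has the pseudo-orbit tracing property (POTP) if for every $\epsilon>0$ there is $\delta>0$ such that every $\delta$-pseudo-orbit can be $\epsilon$-shadowed. For $x\in X$ and $\delta\ge0$ let $\Phi_\delta(x)=\{y\in X: d(f^i(x),f^i(y))\le\delta \text{ for all } i\in\mathbb{N}=\{0,1,2,\dots\}\}$. A (not necessarily invariant) Borel probability measure $\mu$ on $X$ is positively expansive if there is $e>0$ (an expansivity constant) such that $\mu(\Phi_e(x))=0$ for every $x\in X$. *)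

From Stdlib Require Import Reals ZArith List.
Open Scope R_scope.

Definition is_metric {X : Type} (d : X -> X -> R) : Prop :=
  (forall x y, 0 <= d x y) /\
  (forall x y, d x y = 0 <-> x = y) /\
  (forall x y, d x y = d y x) /\
  (forall x y z, d x z <= d x y + d y z).

Definition is_open {X : Type} (d : X -> X -> R) (U : X -> Prop) : Prop :=
  forall x, U x -> exists r, 0 < r /\ forall y, d x y < r -> U y.

Definition is_compact {X : Type} (d : X -> X -> R) : Prop :=
  forall (I : Type) (U : I -> X -> Prop),
    (forall i, is_open d (U i)) ->
    (forall x, exists i, U i x) ->
    exists l : list I, forall x, exists i, In i l /\ U i x.

Definition continuous_map {X : Type} (d : X -> X -> R) (f : X -> X) : Prop :=
  forall x eps, 0 < eps -> exists delta, 0 < delta /\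
    forall y, d x y < delta -> d (f x) (f y) < eps.

Definition is_homeomorphism {X : Type} (d : X -> X -> R) (f : X -> X) : Prop :=
  continuous_map d f /\
  exists g : X -> X, (forall x, g (f x) = x) /\ (forall y, f (g y) = y) /\
    continuous_map d g.

Definition pseudo_orbit {X : Type} (d : X -> X -> R) (f : X -> X)
    (delta : R) (xs : Z -> X) : Prop :=
  forall i : Z, d (f (xs i)) (xs (i + 1)%Z) <= delta.

(* eps-shadowed: there is x with d(f^i x, x_i) <= eps for all i in Z.
   For a bijective f, (f^i x)_{i in Z} is exactly a bi-infinite f-orbit
   y with y (i+1) = f (y i) and y 0 = x. *)
Definition shadowed {X : Type} (d : X -> X -> R) (f : X -> X)
    (eps : R) (xs : Z -> X) : Prop :=
  exists y : Z -> X, (forall i : Z, y (i + 1)%Z = f (y i)) /\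
    (forall i : Z, d (y i) (xs i) <= eps).

Definition POTP {X : Type} (d : X -> X -> R) (f : X -> X) : Prop :=
  forall eps, 0 < eps -> exists delta, 0 < delta /\
    forall xs : Z -> X, pseudo_orbit d f delta xs -> shadowed d f eps xs.

Definition sigma_algebra {X : Type} (S : (X -> Prop) -> Prop) : Prop :=
  S (fun _ => True) /\
  (forall A, S A -> S (fun x => ~ A x)) /\
  (forall A : nat -> X -> Prop, (forall n, S (A n)) -> S (fun x => exists n, A n x)).

Definition borel {X : Type} (d : X -> X -> R) (A : X -> Prop) : Prop :=
  forall S : (X -> Prop) -> Prop, sigma_algebra S ->
    (forall U, is_open d U -> S U) -> S A.

(* mu is a (countably additive) Borel probability measure; its values on
   non-Borel sets are irrelevant. *)
Definition borel_probability {X : Type} (d : X -> X -> R)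
    (mu : (X -> Prop) -> R) : Prop :=
  (forall A, borel d A -> 0 <= mu A) /\
  mu (fun _ => True) = 1 /\
  (forall A : nat -> X -> Prop,
     (forall n, borel d (A n)) ->
     (forall n m x, n <> m -> A n x -> A m x -> False) ->
     infinite_sum (fun n => mu (A n)) (mu (fun x => exists n, A n x))).

Definition Phi {X : Type} (d : X -> X -> R) (f : X -> X) (delta : R) (x : X)
    : X -> Prop :=
  fun y => forall i : nat, d (Nat.iter i f x) (Nat.iter i f y) <= delta.

Definition positively_expansive_measure {X : Type} (d : X -> X -> R)
    (f : X -> X) (mu : (X -> Prop) -> R) : Prop :=
  exists e, 0 < e /\ forall x, mu (Phi d f e x) = 0.

Definition separated {X : Type} (d : X -> X -> R) (f : X -> X)
    (n : nat) (eps : R) (E : list X) : Prop :=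
  NoDup E /\
  forall x y, In x E -> In y E -> x <> y ->
    exists i, (i < n)%nat /\ eps < d (Nat.iter i f x) (Nat.iter i f y).

(* h_top(f) = lim_{eps->0} limsup_n (1/n) log s(n,eps), with s(n,eps) the
   maximal cardinality of an (n,eps)-separated set.  Since the limit in eps
   is a monotone supremum, h_top(f) > 0 unfolds to: for some eps > 0,
   limsup_n (1/n) log s(n,eps) > 0, i.e. there is c > 0 such that for
   infinitely many n there is an (n,eps)-separated set E with
   (1/n) log |E| >= c. *)
Definition positive_topological_entropy {X : Type} (d : X -> X -> R)
    (f : X -> X) : Prop :=
  exists eps, 0 < eps /\ exists c, 0 < c /\
    forall N : nat, exists n : nat, (N <= n)%nat /\ (0 < n)%nat /\
      exists E : list X, separated d f n eps E /\
        c <= ln (INR (length E)) / INR n.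

From Stdlib Require Import Reals ZArith List Lia Lra Classical ClassicalEpsilon
  FunctionalExtensionality PropExtensionality.
Open Scope R_scope.

(* If two freely concatenable delta-loops differ somewhere by more than the
   expansivity constant e, shadowing their 2^n concatenations gives 2^n orbits
   that are pairwise separated up to time nL, so the entropy is positive.
   Otherwise, cover X by finitely many small balls and record, for each point,
   the balls its orbit visits up to a time T after which it returns infinitely
   often to the ball visited at time T.  Two points with the same record yield
   such a pair of loops (follow one orbit back to that ball, then switch to the
   other), hence stay e-close forever.  So each of the countably many records is
   contained in some Phi_e(x), a null set, contradicting mu(X) = 1. *)

Lemma pred_ext {X : Type} (A B : X -> Prop) : (forall x, A x <-> B x) -> A = B.
Proof.
  intro H. apply functional_extensionality; intro x.
  apply propositional_extensionality; auto.
Qed.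

Section Borel.
Context {X : Type} (d : X -> X -> R).

Lemma borel_open U : is_open d U -> borel d U.
Proof. intros HU S HS HO; auto. Qed.

Lemma borel_compl A : borel d A -> borel d (fun x => ~ A x).
Proof. intros HA S HS HO. pose proof (HA S HS HO). destruct HS as (_ & Hc & _). auto. Qed.

Lemma borel_union (A : nat -> X -> Prop) :
  (forall n, borel d (A n)) -> borel d (fun x => exists n, A n x).
Proof.
  intros HA S HS HO. assert (HAS : forall n, S (A n)) by (intro n; apply HA; auto).
  destruct HS as (_ & _ & Hu). auto.
Qed.

Lemma borel_True : borel d (fun _ => True).
Proof. apply borel_open. intros x _. exists 1. split; [lra | auto]. Qed.

Lemma borel_False : borel d (fun _ => False).
Proof. apply borel_open. intros x []. Qed.

Lemma borel_inter A B : borel d A -> borel d B -> borel d (fun x => A x /\ B x).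
Proof.
  intros HA HB.
  replace (fun x => A x /\ B x)
    with (fun x => ~ exists n : nat, match n with O => ~ A x | _ => ~ B x end).
  - apply borel_compl, borel_union. intros [|n]; apply borel_compl; auto.
  - apply pred_ext. intro x; split.
    + intro H. split; apply NNPP; intro H'; apply H; [exists O | exists 1%nat]; exact H'.
    + intros [H1 H2] [[|n] Hn]; auto.
Qed.

End Borel.

Lemma infinite_sum_two (u : nat -> R) :
  (forall n, (2 <= n)%nat -> u n = 0) -> infinite_sum u (u O + u 1%nat).
Proof.
  intros H0 eps Heps. exists 1%nat. intros n Hn. unfold R_dist.
  replace (sum_f_R0 u n) with (u O + u 1%nat). { rewrite Rminus_diag, Rabs_R0; auto. }
  induction n as [|n IH]; [lia|]. destruct n; [reflexivity|].
  cbn [sum_f_R0] in *. rewrite IH, (H0 (S (S n))) by lia. ring.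
Qed.

Section Measure.
Context {X : Type} (d : X -> X -> R) (mu : (X -> Prop) -> R).
Hypothesis Hmu : borel_probability d mu.

Lemma mu_empty : mu (fun _ => False) = 0.
Proof.
  destruct Hmu as (_ & _ & Hadd).
  pose proof (Hadd (fun _ _ => False) (fun _ => borel_False d) (fun _ _ _ _ H _ => H)) as Hs.
  cbv beta in Hs.
  replace (fun x : X => exists _ : nat, False) with (fun _ : X => False) in Hs
    by (apply pred_ext; firstorder).
  set (c := mu (fun _ => False)) in *.
  destruct (Req_dec c 0) as [|Hc]; auto. exfalso.
  destruct (Hs (Rabs c)) as [N HN]; [apply Rabs_pos_lt; auto|].
  specialize (HN (S N) ltac:(lia)). unfold R_dist in HN.
  rewrite sum_cte in HN.
  replace (c * INR (S (S N)) - c) with (INR (S N) * c) in HN by (rewrite (S_INR (S N)); ring).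
  rewrite Rabs_mult, Rabs_right in HN by (apply Rle_ge, pos_INR).
  assert (1 <= INR (S N)) by (rewrite S_INR; pose proof (pos_INR N); lra).
  pose proof (Rabs_pos c). nra.
Qed.

Lemma mu_mono A B : borel d A -> borel d B -> (forall x, A x -> B x) -> mu A <= mu B.
Proof.
  intros HA HB Hsub. destruct Hmu as (Hpos & _ & Hadd).
  set (S := fun n : nat => match n with
                          | O => A | 1%nat => fun x => B x /\ ~ A x | _ => fun _ => False end).
  assert (HS : forall n, borel d (S n)).
  { intros [|[|n]]; simpl; auto using borel_inter, borel_compl, borel_False. }
  assert (Hdisj : forall n m x, n <> m -> S n x -> S m x -> False).
  { intros [|[|n]] [|[|m]] x Hnm; simpl; intuition. }
  pose proof (Hadd S HS Hdisj) as Hsum.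
  replace (fun x => exists n, S n x) with B in Hsum.
  2:{ apply pred_ext; intro x; split.
      - intro Hx. destruct (classic (A x)); [exists O | exists 1%nat]; simpl; auto.
      - intros [[|[|n]] Hn]; simpl in Hn; intuition. }
  assert (Htwo := infinite_sum_two (fun n => mu (S n))).
  rewrite (uniqueness_sum _ _ _ Hsum (Htwo ltac:(intros [|[|n]] Hn; [lia|lia|apply mu_empty]))).
  pose proof (Hpos _ (HS 1%nat)). simpl in *. lra.
Qed.

Lemma mu_union_null (B : nat -> X -> Prop) :
  (forall n, borel d (B n)) -> (forall n, mu (B n) = 0) -> mu (fun x => exists n, B n x) = 0.
Proof.
  intros HB Hnull. destruct Hmu as (Hpos & _ & Hadd).
  set (D := fun n x => B n x /\ ~ exists k, (k < n)%nat /\ B k x).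
  assert (HD : forall n, borel d (D n)).
  { intro n. apply borel_inter, borel_compl, borel_union; auto. intro k.
    destruct (Nat.lt_ge_cases k n).
    - replace (fun x => (k < n)%nat /\ B k x) with (B k); auto. apply pred_ext; intuition.
    - replace (fun x => (k < n)%nat /\ B k x) with (fun _ : X => False).
      + apply borel_False.
      + apply pred_ext; intuition lia. }
  assert (Hdisj : forall n m x, n <> m -> D n x -> D m x -> False).
  { intros n m x Hnm [Hn Hn'] [Hm Hm'].
    destruct (Nat.lt_ge_cases n m); [apply Hm' | apply Hn'; exists m; split]; eauto; lia. }
  replace (fun x => exists n, B n x) with (fun x => exists n, D n x).
  2:{ apply pred_ext; intro x; split.
      - intros [n [Hn _]]; eauto.
      - intro Hx.
        destruct (dec_inh_nat_subset_has_unique_least_element (fun n => B n x)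
                    (fun n => classic _) Hx) as [n [[Hn Hleast] _]].
        exists n. split; auto. intros [k [Hk Bk]]. specialize (Hleast k Bk). lia. }
  assert (HDnull : forall n, mu (D n) = 0).
  { intro n. pose proof (Hpos _ (HD n)).
    pose proof (mu_mono (D n) (B n) (HD n) (HB n) (fun x H => proj1 H)).
    rewrite Hnull in *. lra. }
  apply (uniqueness_sum _ _ _ (Hadd D HD Hdisj)).
  intros eps Heps. exists O. intros n _. unfold R_dist.
  replace (sum_f_R0 (fun n => mu (D n)) n) with 0; [rewrite Rminus_diag, Rabs_R0; auto|].
  induction n; simpl; rewrite HDnull; lra.
Qed.

Definition negligible (A : X -> Prop) : Prop :=
  exists B, borel d B /\ mu B = 0 /\ forall x, A x -> B x.

Lemma negligible_cover (A : nat -> X -> Prop) (C : X -> Prop) :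
  (forall n, negligible (A n)) -> (forall x, C x -> exists n, A n x) -> negligible C.
Proof.
  intros HA Hcov. destruct (choice _ HA) as [B HB].
  exists (fun x => exists n, B n x). split; [|split].
  - apply borel_union. intro n. apply HB.
  - apply mu_union_null; intro n; apply HB.
  - intros x Hx. destruct (Hcov x Hx) as [n Hn]. exists n. apply HB, Hn.
Qed.

Lemma full_not_negligible : ~ negligible (fun _ => True).
Proof.
  intros (B & HB & HB0 & HTB).
  pose proof (mu_mono _ _ (borel_True d) HB HTB).
  destruct Hmu as (_ & H1 & _). lra.
Qed.

Lemma borel_probability_inhabited : inhabited X.
Proof.
  apply NNPP. intro Hempty. destruct Hmu as (_ & H1 & _).
  replace (fun _ : X => True) with (fun _ : X => False) in H1.
  - rewrite mu_empty in H1. lra.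
  - apply pred_ext. intro x. exfalso. exact (Hempty (inhabits x)).
Qed.

End Measure.

Fixpoint words (n : nat) : list (list bool) :=
  match n with
  | O => nil :: nil
  | S n => map (cons true) (words n) ++ map (cons false) (words n)
  end.

Lemma length_words n : length (words n) = (2 ^ n)%nat.
Proof. induction n; simpl; auto. rewrite length_app, !length_map, IHn. lia. Qed.

Lemma in_words_length n w : In w (words n) -> length w = n.
Proof.
  revert w; induction n; simpl; intros w H.
  - destruct H as [<-|[]]; auto.
  - apply in_app_or in H.
    destruct H as [H|H]; apply in_map_iff in H; destruct H as [w' [<- H]]; simpl; auto.
Qed.

Lemma NoDup_words n : NoDup (words n).
Proof.
  induction n; simpl.
  - repeat constructor; auto.
  - apply NoDup_app; try (apply NoDup_map_NoDup_ForallPairs; auto; intros a b _ _ H; congruence).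
    intros a Ha Hb. apply in_map_iff in Ha, Hb.
    destruct Ha as [? [<- _]], Hb as [? [? _]]. discriminate.
Qed.

Lemma nth_neq_of_neq (w1 w2 : list bool) : length w1 = length w2 -> w1 <> w2 ->
  exists m, (m < length w1)%nat /\ nth m w1 false <> nth m w2 false.
Proof.
  revert w2; induction w1 as [|x w1 IH]; intros [|y w2] Hl Hne; simpl in *; try lia.
  - congruence.
  - destruct (Bool.bool_dec x y) as [<-|Hxy].
    + destruct (IH w2 ltac:(lia) ltac:(congruence)) as [m [Hm Hn]].
      exists (S m). split; auto; lia.
    + exists O. split; auto; lia.
Qed.

Fixpoint digit (m k i : nat) : nat :=
  match i with O => k mod m | S i => digit m (k / m) i end.

Lemma digits_surjective m T (g : nat -> nat) : (0 < m)%nat ->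
  (forall i, (i <= T)%nat -> (g i < m)%nat) -> exists k, forall i, (i <= T)%nat -> digit m k i = g i.
Proof.
  intro Hm. revert g; induction T as [|T IH]; intros g Hg.
  - exists (g O). intros i Hi. replace i with O by lia. apply Nat.mod_small, Hg; lia.
  - destruct (IH (fun i => g (S i))) as [k Hk]; [intros i Hi; apply Hg; lia|].
    exists (g O + k * m)%nat. intros [|i] Hi; simpl.
    + rewrite Nat.Div0.mod_add. apply Nat.mod_small, Hg; lia.
    + rewrite Nat.div_add, Nat.div_small by (try apply Hg; lia). apply Hk. lia.
Qed.

Lemma pigeonhole_infinitely_often {A : Type} (l : list A) (P : A -> nat -> Prop) :
  (forall j, exists c, In c l /\ P c j) ->
  exists c, In c l /\ forall N, exists j, (N <= j)%nat /\ P c j.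
Proof.
  intro Hall. apply NNPP. intro Hnone.
  assert (Hbound : forall l', incl l' l ->
            exists N, forall c, In c l' -> forall j, (N <= j)%nat -> ~ P c j).
  { induction l' as [|c l' IH]; intro Hsub.
    - exists O. intros c [].
    - destruct IH as [N1 HN1]; [intros c' Hc'; apply Hsub; right; auto|].
      assert (Hc : exists N, forall j, (N <= j)%nat -> ~ P c j).
      { apply NNPP. intro H2. apply Hnone. exists c. split; [apply Hsub; left; auto|].
        intro N. apply NNPP; intro H3. apply H2. exists N. intros j Hj Pj. apply H3; eauto. }
      destruct Hc as [N2 HN2]. exists (Nat.max N1 N2). intros c' [<-|Hc'] j Hj.
      + apply HN2; lia.
      + apply HN1; auto; lia. }
  destruct (Hbound l (incl_refl l)) as [N HN].
  destruct (Hall N) as [c [Hc Pc]]. eapply HN; eauto.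
Qed.

Lemma succ_divmod (L i : Z) : (0 < L)%Z ->
  ((i mod L + 1 < L) /\ (i + 1) mod L = i mod L + 1 /\ (i + 1) / L = i / L)%Z \/
  (i mod L = L - 1 /\ (i + 1) mod L = 0 /\ (i + 1) / L = i / L + 1)%Z.
Proof.
  intro HL. pose proof (Z.div_mod i L ltac:(lia)). pose proof (Z.mod_pos_bound i L HL).
  destruct (Z_lt_dec (i mod L + 1) L).
  - left. repeat split; auto; symmetry.
    + apply (Z.mod_unique _ _ (i / L)); lia.
    + apply (Z.div_unique _ _ _ (i mod L + 1)); lia.
  - right. repeat split; [lia| |]; symmetry.
    + apply (Z.mod_unique _ _ (i / L + 1)); lia.
    + apply (Z.div_unique _ _ _ 0); lia.
Qed.

Section Metric.
Context {X : Type} (d : X -> X -> R) (f : X -> X).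
Hypothesis Hmet : is_metric d.

Lemma continuous_map_iter n : continuous_map d f -> continuous_map d (Nat.iter n f).
Proof.
  intro Hf. induction n as [|n IH]; intros x eps Heps.
  - exists eps; split; auto.
  - destruct (Hf (Nat.iter n f x) eps Heps) as [r1 [Hr1 H1]].
    destruct (IH x r1 Hr1) as [r2 [Hr2 H2]].
    exists r2; split; auto. intros y Hy. apply H1, H2, Hy.
Qed.

Lemma is_open_ball (c : X) (r : R) : is_open d (fun y => d c y < r).
Proof.
  destruct Hmet as (_ & _ & _ & Htri). intros y Hy.
  exists (r - d c y). split; [lra|]. intros z Hz. pose proof (Htri c y z). lra.
Qed.

Lemma is_open_far (g : X -> X) (a : X) (e : R) :
  continuous_map d g -> is_open d (fun y => e < d a (g y)).
Proof.
  destruct Hmet as (_ & _ & Hsym & Htri). intros Hg y Hy.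
  destruct (Hg y (d a (g y) - e) ltac:(lra)) as [r [Hr H]].
  exists r; split; auto. intros z Hz. specialize (H z Hz).
  pose proof (Htri a (g z) (g y)). rewrite (Hsym (g z)) in *. lra.
Qed.

Lemma borel_Phi e x : continuous_map d f -> borel d (Phi d f e x).
Proof.
  intro Hf.
  replace (Phi d f e x) with (fun y => ~ exists i, e < d (Nat.iter i f x) (Nat.iter i f y)).
  - apply borel_compl, borel_union. intro i.
    apply borel_open, is_open_far, continuous_map_iter, Hf.
  - apply pred_ext. intro y; unfold Phi; split.
    + intros H i. apply Rnot_lt_le. intro Hi. apply H. eauto.
    + intros H [i Hi]. specialize (H i). lra.
Qed.

End Metric.

Section Concatenation.
Context {X : Type} (d : X -> X -> R) (f : X -> X) (delta : R).

Definition chain (L : nat) (u : nat -> X) : Prop :=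
  forall j, (S j < L)%nat -> d (f (u j)) (u (S j)) <= delta.

Definition links (L : nat) (u v : nat -> X) : Prop :=
  d (f (u (L - 1)%nat)) (v O) <= delta.

Definition loop_pair (L : nat) (u v : nat -> X) : Prop :=
  chain L u /\ chain L v /\ links L u u /\ links L u v /\ links L v u /\ links L v v.

Definition loop_pairs_close (theta : R) : Prop :=
  forall L u v t, (0 < L)%nat -> loop_pair L u v -> (t < L)%nat -> d (u t) (v t) <= theta.

Definition concat (L : nat) (blocks : Z -> nat -> X) (i : Z) : X :=
  blocks (i / Z.of_nat L)%Z (Z.to_nat (i mod Z.of_nat L)).

Lemma concat_pseudo_orbit L blocks : (0 < L)%nat ->
  (forall n, chain L (blocks n)) -> (forall n, links L (blocks n) (blocks (n + 1)%Z)) ->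
  pseudo_orbit d f delta (concat L blocks).
Proof.
  intros HL Hchain Hlinks i. unfold concat.
  pose proof (Z.mod_pos_bound i (Z.of_nat L) ltac:(lia)).
  destruct (succ_divmod (Z.of_nat L) i ltac:(lia)) as [[Hr [-> ->]]|[Hr [-> ->]]].
  - replace (Z.to_nat (i mod Z.of_nat L + 1)) with (S (Z.to_nat (i mod Z.of_nat L))) by lia.
    apply Hchain. lia.
  - rewrite Hr. replace (Z.to_nat (Z.of_nat L - 1)) with (L - 1)%nat by lia. apply Hlinks.
Qed.

Lemma concat_block L blocks m t : (t < L)%nat ->
  concat L blocks (Z.of_nat (m * L + t)) = blocks (Z.of_nat m) t.
Proof.
  intro Ht. unfold concat.
  set (i := Z.of_nat (m * L + t)).
  rewrite <- (Z.div_unique i (Z.of_nat L) (Z.of_nat m) (Z.of_nat t)) by (unfold i; lia).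
  rewrite <- (Z.mod_unique i (Z.of_nat L) (Z.of_nat m) (Z.of_nat t)) by (unfold i; lia).
  rewrite Nat2Z.id. reflexivity.
Qed.

End Concatenation.

Lemma iter_bi_orbit {X : Type} (f : X -> X) (y : Z -> X) :
  (forall i, y (i + 1)%Z = f (y i)) -> forall n, Nat.iter n f (y 0%Z) = y (Z.of_nat n).
Proof.
  intros Hy n. induction n as [|n IH]; [reflexivity|].
  simpl Nat.iter. rewrite IH, <- Hy. f_equal. lia.
Qed.

Section Entropy.
Context {X : Type} (d : X -> X -> R) (f : X -> X).
Hypothesis Hmet : is_metric d.

Lemma positive_entropy_of_doubling eta L : 0 < eta -> (0 < L)%nat ->
  (forall n, exists E, separated d f (n * L) eta E /\ length E = (2 ^ n)%nat) ->
  positive_topological_entropy d f.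
Proof.
  intros Heta HL Hsep. exists eta. split; auto.
  assert (Hln2 : 0 < ln 2) by (rewrite <- ln_1; apply ln_increasing; lra).
  exists (ln 2 / INR L). split; [apply Rdiv_lt_0_compat; auto; apply lt_0_INR; auto|].
  intro N. exists (S N * L)%nat. split; [nia|]. split; [nia|].
  destruct (Hsep (S N)) as [E [HE Hlen]]. exists E. split; auto.
  rewrite Hlen, pow_INR, ln_pow, mult_INR by (simpl; lra).
  replace (INR 2) with 2 by (simpl; ring). apply Req_le. field.
  split; apply not_0_INR; lia.
Qed.

Lemma separated_map_words (Y : list bool -> X) n L eta : 0 <= eta ->
  (forall w1 w2, In w1 (words n) -> In w2 (words n) -> w1 <> w2 ->
     exists i, (i < n * L)%nat /\ eta < d (Nat.iter i f (Y w1)) (Nat.iter i f (Y w2))) ->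
  separated d f (n * L) eta (map Y (words n)).
Proof.
  destruct Hmet as (_ & Hdeq & _ & _). intros Heta Hsep. split.
  - apply NoDup_map_NoDup_ForallPairs; [|apply NoDup_words].
    intros w1 w2 H1 H2 HY. apply NNPP. intro Hne.
    destruct (Hsep w1 w2 H1 H2 Hne) as [i [_ Hi]].
    rewrite HY, (proj2 (Hdeq _ _) eq_refl) in Hi. lra.
  - intros x y Hx Hy Hxy. apply in_map_iff in Hx, Hy.
    destruct Hx as [w1 [<- H1]], Hy as [w2 [<- H2]].
    apply Hsep; auto. intros ->. auto.
Qed.

(* Every binary word [w] selects a concatenation of the two loops; the shadowing
   orbits of different words stay apart at a block where the words differ. *)
Lemma entropy_of_loop_pair eps delta L u v t :
  (forall xs, pseudo_orbit d f delta xs -> shadowed d f eps xs) ->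
  (0 < L)%nat -> loop_pair d f delta L u v -> (t < L)%nat -> 2 * eps < d (u t) (v t) ->
  positive_topological_entropy d f.
Proof.
  intros Hshadow HL (Hu & Hv & Huu & Huv & Hvu & Hvv) Ht Hgap.
  pose proof Hmet as (_ & _ & Hsym & Htri).
  set (blocks := fun (w : list bool) (n : Z) => if nth (Z.to_nat n) w false then u else v).
  assert (Horbit : forall w, exists y : Z -> X, (forall i, y (i + 1)%Z = f (y i)) /\
                     forall i, d (y i) (concat L (blocks w) i) <= eps).
  { intro w. apply Hshadow, concat_pseudo_orbit; auto; intro n; unfold blocks;
      repeat destruct nth; auto. }
  destruct (choice _ Horbit) as [y Hy].
  set (eta := (d (u t) (v t) - 2 * eps) / 2).
  apply (positive_entropy_of_doubling eta L); [unfold eta; lra | auto |].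
  intro n. exists (map (fun w => y w 0%Z) (words n)). split.
  2:{ rewrite length_map. apply length_words. }
  apply separated_map_words; [unfold eta; lra|].
  intros w1 w2 H1 H2 Hne.
  destruct (nth_neq_of_neq w1 w2) as [m [Hm Hbit]];
    [rewrite (in_words_length _ _ H1), (in_words_length _ _ H2); auto | auto |].
  rewrite (in_words_length _ _ H1) in Hm.
  exists (m * L + t)%nat. split; [nia|].
  rewrite !(iter_bi_orbit f _ (proj1 (Hy _))).
  set (i := Z.of_nat (m * L + t)).
  assert (Hblocks : d (u t) (v t) = d (concat L (blocks w1) i) (concat L (blocks w2) i)).
  { unfold i. rewrite !concat_block by auto. unfold blocks. rewrite !Nat2Z.id.
    destruct (nth m w1 false), (nth m w2 false); congruence || apply Hsym. }
  pose proof (proj2 (Hy w1) i). pose proof (proj2 (Hy w2) i).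
  pose proof (Htri (concat L (blocks w1) i) (y w1 i) (concat L (blocks w2) i)).
  pose proof (Htri (y w1 i) (y w2 i) (concat L (blocks w2) i)).
  rewrite (Hsym (concat L (blocks w1) i) (y w1 i)) in *. unfold eta. lra.
Qed.

Lemma entropy_of_far_loop_pairs eps delta theta :
  (forall xs, pseudo_orbit d f delta xs -> shadowed d f eps xs) ->
  2 * eps <= theta -> ~ loop_pairs_close d f delta theta -> positive_topological_entropy d f.
Proof.
  intros Hshadow Htheta Hfar. apply NNPP. intro Hzero. apply Hfar.
  intros L u v t HL Hloop Ht. apply Rnot_lt_le. intro Hgap.
  apply Hzero, (entropy_of_loop_pair eps delta L u v t); auto. lra.
Qed.

End Entropy.

Section Recurrence.
Context {X : Type} (d : X -> X -> R) (f : X -> X).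
Hypothesis Hmet : is_metric d.

Definition returns_to (c : X) (s : R) (z : X) : Prop :=
  forall N, exists j, (N <= j)%nat /\ d c (Nat.iter j f z) < s.

Lemma returns_to_iter c s z T : returns_to c s z -> returns_to c s (Nat.iter T f z).
Proof.
  intros Hz N. destruct (Hz (N + T)%nat) as [j [Hj Hd]].
  exists (j - T)%nat. split; [lia|].
  rewrite <- Nat.iter_add. replace (j - T + T)%nat with j by lia. auto.
Qed.

Lemma dist_lt_through c s z1 z2 : d c z1 < s -> d c z2 < s -> d z1 z2 < 2 * s.
Proof.
  destruct Hmet as (_ & _ & Hsym & Htri). intros H1 H2.
  pose proof (Htri z1 c z2). rewrite (Hsym z1 c) in *. lra.
Qed.

Definition orbit_then (p : X) (a : nat) (q : X) (j : nat) : X :=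
  if Nat.ltb j a then Nat.iter j f p else Nat.iter (j - a) f q.

Lemma orbit_then_0 p a q : (0 < a)%nat -> orbit_then p a q O = p.
Proof. intro Ha. unfold orbit_then. destruct (Nat.ltb_spec 0 a); [reflexivity | lia]. Qed.

Lemma orbit_then_last p a q b j : (0 < b)%nat -> j = (a + b - 1)%nat ->
  f (orbit_then p a q j) = Nat.iter b f q.
Proof.
  intros Hb ->. unfold orbit_then. destruct (Nat.ltb_spec (a + b - 1) a); [lia|].
  replace (a + b - 1 - a)%nat with (b - 1)%nat by lia.
  destruct b; [lia|]. simpl. rewrite Nat.sub_0_r. reflexivity.
Qed.

Lemma chain_orbit_then delta L p a q : 0 <= delta -> d (Nat.iter a f p) q <= delta ->
  chain d f delta L (orbit_then p a q).
Proof.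
  destruct Hmet as (_ & Hdeq & _ & _). intros Hdelta Hjump j _. unfold orbit_then.
  assert (Hzero : forall z, d z z <= delta) by (intro z; rewrite (proj2 (Hdeq z z) eq_refl); auto).
  destruct (Nat.ltb_spec j a), (Nat.ltb_spec (S j) a).
  - apply Hzero.
  - replace a with (S j) in * by lia. rewrite Nat.sub_diag. exact Hjump.
  - lia.
  - replace (S j - a)%nat with (S (j - a)) by lia. apply Hzero.
Qed.

(* Run the orbit of [p] until it comes back near [c], then jump to [q], or the
   other way round: two loops that can be concatenated freely. *)
Lemma loop_pair_of_returns delta s c p q a b : 2 * s <= delta -> (0 < a)%nat -> (0 < b)%nat ->
  d c p < s -> d c q < s -> d c (Nat.iter a f p) < s -> d c (Nat.iter b f q) < s ->
  loop_pair d f delta (a + b) (orbit_then p a q) (orbit_then q b p).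
Proof.
  intros Hs Ha Hb Hp Hq Hap Hbq.
  assert (Hclose : forall z1 z2, d c z1 < s -> d c z2 < s -> d z1 z2 <= delta).
  { intros z1 z2 H1 H2. pose proof (dist_lt_through c s z1 z2 H1 H2). lra. }
  assert (Hdelta : 0 <= delta) by (destruct Hmet as (Hd0 & _); pose proof (Hd0 c p); lra).
  unfold loop_pair, links.
  rewrite (orbit_then_last p a q b), (orbit_then_last q b p a), !orbit_then_0 by lia.
  repeat split; apply chain_orbit_then || apply Hclose; auto.
Qed.

Lemma orbits_stay_close delta theta s c p q :
  loop_pairs_close d f delta theta -> 2 * s <= delta -> d c p < s -> d c q < s -> returns_to c s p -> returns_to c s q ->
  forall t, d (Nat.iter t f p) (Nat.iter t f q) <= theta.
Proof.
  intros Hno Hs Hp Hq Hrp Hrq t.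
  destruct (Hrp (S t)) as [a [Ha Hap]], (Hrq (S t)) as [b [Hb Hbq]].
  assert (Hloop := loop_pair_of_returns delta s c p q a b Hs ltac:(lia) ltac:(lia) Hp Hq Hap Hbq).
  pose proof (Hno (a + b)%nat _ _ t ltac:(lia) Hloop ltac:(lia)) as Ht.
  unfold orbit_then in Ht. destruct (Nat.ltb_spec t a), (Nat.ltb_spec t b); [exact Ht | lia..].
Qed.

End Recurrence.

Section Itineraries.
Context {X : Type} (d : X -> X -> R) (f : X -> X) (centers : list X) (x0 : X) (s : R).

(* The base-[length centers] digits of [k] code a finite itinerary through the
   centers; this makes the family of itineraries countable. *)
Definition center (k i : nat) : X := nth (digit (length centers) k i) centers x0.

Definition itinerary_set (T k : nat) (y : X) : Prop :=
  (forall i, (i <= T)%nat -> d (center k i) (Nat.iter i f y) < s) /\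
  returns_to d f (center k T) s y.

Lemma itinerary_sets_cover : (forall z, exists c, In c centers /\ d c z < s) ->
  forall y, exists T k, itinerary_set T k y.
Proof.
  intros Hcov y.
  destruct (pigeonhole_infinitely_often centers (fun c j => d c (Nat.iter j f y) < s))
    as [c [Hc Hrec]]; [intro j; apply Hcov|].
  destruct (Hrec O) as [T [_ HT]].
  destruct (In_nth centers c x0 Hc) as [n [Hn Hnth]].
  assert (Hidx : forall i, exists n', (n' < length centers)%nat /\
                   d (nth n' centers x0) (Nat.iter i f y) < s).
  { intro i. destruct (Hcov (Nat.iter i f y)) as [c' [Hc' Hd']].
    destruct (In_nth centers c' x0 Hc') as [n' [Hn' <-]]. eauto. }
  destruct (choice _ Hidx) as [g Hg].
  destruct (digits_surjective (length centers) T (fun i => if Nat.eqb i T then n else g i))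
    as [k Hk]; [lia | intros i _; destruct (Nat.eqb i T); [auto | apply Hg]|].
  exists T, k. unfold itinerary_set, center. split.
  - intros i Hi. rewrite Hk by auto.
    destruct (Nat.eqb_spec i T) as [->|]; [rewrite Hnth; auto | apply Hg].
  - rewrite Hk, Nat.eqb_refl, Hnth by auto. exact Hrec.
Qed.

Hypothesis Hmet : is_metric d.

Lemma itinerary_set_Phi delta e T k x y :
  loop_pairs_close d f delta e -> 2 * s <= delta -> 2 * s <= e -> itinerary_set T k x -> itinerary_set T k y -> Phi d f e x y.
Proof.
  intros Hno Hsd Hse [Hx Hrx] [Hy Hry] i.
  destruct (Nat.le_gt_cases i T) as [Hi|Hi].
  - pose proof (dist_lt_through d Hmet _ _ _ _ (Hx i Hi) (Hy i Hi)). lra.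
  - replace i with ((i - T) + T)%nat by lia. rewrite !Nat.iter_add.
    apply (orbits_stay_close d f Hmet delta e s (center k T)); auto using returns_to_iter.
Qed.

Lemma negligible_itinerary_set mu delta e T k :
  borel_probability d mu -> continuous_map d f -> (forall x, mu (Phi d f e x) = 0) ->
  loop_pairs_close d f delta e -> 2 * s <= delta -> 2 * s <= e ->
  negligible d mu (itinerary_set T k).
Proof.
  intros Hprob Hf Hnull Hclose Hsd Hse.
  destruct (classic (exists x, itinerary_set T k x)) as [[x Hx]|Hempty].
  - exists (Phi d f e x). split; [apply borel_Phi; auto|]. split; [apply Hnull|].
    intros y Hy. apply (itinerary_set_Phi delta e T k); auto.
  - exists (fun _ => False). split; [apply borel_False|]. split; [apply (mu_empty d mu Hprob)|].
    intros y Hy. eauto.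
Qed.

End Itineraries.

Theorem corollary1 (X : Type) (d : X -> X -> R) (f : X -> X)
  (Hmetric : is_metric d) (Hcompact : is_compact d)
  (Hhomeo : is_homeomorphism d f) (Hpotp : POTP d f)
  (Hmu : exists mu : (X -> Prop) -> R,
           borel_probability d mu /\ positively_expansive_measure d f mu) :
  positive_topological_entropy d f.
Proof.
  destruct Hmu as [mu [Hprob [e [He Hnull]]]].
  destruct (Hpotp (e / 4) ltac:(lra)) as [delta [Hdelta Hshadow]].
  destruct (classic (loop_pairs_close d f delta e)) as [Hclose|Hfar].
  2:{ apply (entropy_of_far_loop_pairs d f Hmetric (e / 4) delta e); auto. lra. }
  exfalso.
  destruct (borel_probability_inhabited d mu Hprob) as [x0].
  set (s := Rmin delta e / 2).
  assert (Hs : 0 < s) by (unfold s, Rmin; destruct Rle_dec; lra).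
  assert (Hsd : 2 * s <= delta) by (unfold s; pose proof (Rmin_l delta e); lra).
  assert (Hse : 2 * s <= e) by (unfold s; pose proof (Rmin_r delta e); lra).
  destruct (Hcompact X (fun c y => d c y < s)) as [centers Hcenters].
  { intro c. apply is_open_ball, Hmetric. }
  { intro x. exists x. rewrite (proj2 (proj1 (proj2 Hmetric) x x) eq_refl). exact Hs. }
  apply (full_not_negligible d mu Hprob).
  apply (negligible_cover d mu Hprob (fun T y => exists k, itinerary_set d f centers x0 s T k y)).
  - intro T. apply (negligible_cover d mu Hprob (itinerary_set d f centers x0 s T)); [|eauto].
    intro k. apply (negligible_itinerary_set d f centers x0 s Hmetric mu delta e); auto.
    apply Hhomeo.
  - intros y _. destruct (itinerary_sets_cover d f centers x0 s Hcenters y) as [T [k Hk]].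
    eauto.
Qed.
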